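(* Let $1\le p<\infty$, $N\ge2$, and for $1\le i\le N$ let $T_i=T_{f_i,\omega^{(i)}}$ be unilateral pseudo-shifts on $\ell^p(\mathbb{N})$ with maps $f_i$ and weights $\omega^{(i)}=(w^{(i)}_{f_i(m)})_m$, and $W^{(i)}_{m,n}=\prod_{\nu=1}^nw^{(i)}_{f_i^\nu(m)}$. Let $n,M\in\mathbb{N}$ and let $x_i=\sum_{m=1}^Ma^{(i)}_me_m$ ($1\le i\le N$) with $a^{(i)}_1,\dots,a^{(i)}_M\neq0$, and put $\Gamma=\max\{\|x_i\|:1\le i\le N\}$. Then there exists $z\in\operatorname{span}\{e_m:m\in\mathbb{N}\}$ such that $\|z\|\le MN\Gamma\max\{|W^{(\ell)}_{m,n}|^{-1}:1\le\ell\le N,\,1\le m\le M\}$, $\|T_1^nz-x_1\|\le MN\Gamma\max\left\{\left|\frac{W^{(1)}_{f_1^{-n}(j),n}}{W^{(\ell)}_{f_\ell^{-n}(j),n}}\right|:2\le\ell\le N,\ j\in f_\ell^n([M])\cap f_1^n(\mathbb{N}\setminus[M])\right\}$, and for each $2\le i\le N$, $\|T_i^nz-x_i\|\le MN\Gamma\max\left\{\left|\frac{W^{(i)}_{f_i^{-n}(j),n}}{W^{(\ell)}_{f_\ell^{-n}(j),n}}-\frac{a^{(i)}_{f_i^{-n}(j)}}{a^{(\ell)}_{f_\ell^{-n}(j)}}\right|:1\le\ell\le i-1,\ j\in f_\ell^n([M])\cap f_i^n([M])\right\}+MN\Gamma\max\left\{\left|\frac{W^{(i)}_{f_i^{-n}(j),n}}{W^{(\ell)}_{f_\ell^{-n}(j),n}}\right|:\ell\neq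 i,\ j\in f_\ell^n([M])\cap f_i^n(\mathbb{N}\setminus[M])\right\}$.
   Context: $\mathbb{N}=\{1,2,\dots\}$; $\{e_m\}$ is the canonical basis of $\ell^p(\mathbb{N})$ over $\mathbb{K}\in\{\mathbb{R},\mathbb{C}\}$. For a strictly increasing $f:\mathbb{N}\to\mathbb{N}$ with $f(1)>1$ and a bounded, nonzero sequence of scalars $\omega=(w_{f(m)})_{m\in\mathbb{N}}$, the unilateral pseudo-shift is $T_{f,\omega}(\sum_m\alpha_me_m)=\sum_mw_{f(m)}\alpha_{f(m)}e_m$. $[M]=\{1,\dots,M\}$, $f^n$ is the $n$-fold composition, $f(A)=\{f(m):m\in A\}$, $f^{-n}$ is the inverse of $f^n$ on $f^n(\mathbb{N})$. The maximum of an empty set is taken to be $0$. *)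

From HB Require Import structures.
From mathcomp Require Import all_boot all_order all_algebra.
From mathcomp Require Import all_classical all_reals all_analysis.
From mathcomp Require Import complex.
Set Implicit Arguments. Unset Strict Implicit. Unset Printing Implicit Defensive.
Import Order.TTheory GRing.Theory Num.Theory.
Local Open Scope classical_set_scope.
Local Open Scope ring_scope.

(* Conventions.
   * N = {1,2,...} is represented inside [nat]; index 0 is never used:
     vectors of l^p(N) are sequences [nat -> K] whose value at 0 is ignored
     (the l^p norm only sums over indices k >= 1).
   * Scalars: a field K together with its absolute value [nrm : K -> R]
     (R a realType); the main theorem instantiates K = R and K = R[i].
   * Maxima of (finite) sets of nonnegative reals are written as big [Num.max]
     with neutral element 0, so that the maximum of an empty set is 0. *)

Section Defs.
Variables (R : realType) (K : fieldType) (nrm : K -> R).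

Definition lp_norm (p : R) (a : nat -> K) : R :=
  (\big[+%R/0]_(1 <= k <oo) (nrm (a k) `^ p)) `^ p^-1.

(* the data of a unilateral pseudo-shift T_{f,omega} with omega = (w (f m))_m *)
Definition pseudo_shift_data (f : nat -> nat) (w : nat -> K) : Prop :=
  [/\ (forall m, (0 < m)%N -> (f m < f m.+1)%N),
      (1 < f 1)%N,
      (exists B : R, forall m, (0 < m)%N -> nrm (w (f m)) <= B) &
      (forall m, (0 < m)%N -> w (f m) != 0)].

Definition pshift (f : nat -> nat) (w : nat -> K) (a : nat -> K) : nat -> K :=
  fun m => if m == 0%N then 0 else w (f m) * a (f m).

Definition Wprod (f : nat -> nat) (w : nat -> K) (m n : nat) : K :=
  \prod_(1 <= nu < n.+1) w (iter nu f m).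

Definition in_span (z : nat -> K) : Prop :=
  z 0%N = 0 /\ exists B : nat, forall m, (B < m)%N -> z m = 0.

Definition finvec (M : nat) (a : nat -> K) : nat -> K :=
  fun m => if (1 <= m <= M)%N then a m else 0.

End Defs.

Definition in_iter_range (f : nat -> nat) (n j : nat) : bool :=
  `[< exists k, (0 < k)%N /\ iter n f k = j >].

(* f^{-n}(j), the inverse of f^n on f^n(N) (junk value 0 outside f^n(N)) *)
Definition iter_inv (f : nat -> nat) (n j : nat) : nat :=
  xget 0%N [set k | (0 < k)%N /\ iter n f k = j].

Definition in_img_le (f : nat -> nat) (n M j : nat) : bool :=
  in_iter_range f n j && (iter_inv f n j <= M)%N.

Definition in_img_gt (f : nat -> nat) (n M j : nat) : bool :=
  in_iter_range f n j && (M < iter_inv f n j)%N.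

Section Statement.
Variables (R : realType) (K : fieldType) (nrm : K -> R).

(* max { F l j : 1 <= l <= N, lcond l, j \in f_l^n([M]), jcond l j }, 0 if empty;
   j ranges over f_l^n([M]) = { f_l^n(m) : 1 <= m <= M } *)
Definition maxover (N M n : nat) (f : nat -> nat -> nat) (lcond : pred nat)
  (jcond : nat -> nat -> bool) (F : nat -> nat -> R) : R :=
  \big[Num.max/0]_(1 <= l < N.+1 | lcond l)
    \big[Num.max/0]_(1 <= m < M.+1 | jcond l (iter n (f l) m))
       F l (iter n (f l) m).

Definition lemma2p5_prop : Prop :=
  forall (p : R) (N : nat) (f : nat -> nat -> nat) (w : nat -> nat -> K)
         (n M : nat) (a : nat -> nat -> K),
  1 <= p -> (2 <= N)%N -> (1 <= n)%N -> (1 <= M)%N ->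
  (forall i, (1 <= i <= N)%N -> pseudo_shift_data nrm (f i) (w i)) ->
  (forall i m, (1 <= i <= N)%N -> (1 <= m <= M)%N -> a i m != 0) ->
  let T i := pshift (f i) (w i) in
  let W i m := Wprod (f i) (w i) m n in
  let x i := finvec M (a i) in
  let Gamma := \big[Num.max/0]_(1 <= i < N.+1) lp_norm nrm p (x i) in
  let C := M%:R * N%:R * Gamma in
  let ratio i l j := nrm (W i (iter_inv (f i) n j) / W l (iter_inv (f l) n j)) in
  exists z : nat -> K,
    [/\ in_span z,
        lp_norm nrm p z <=
          C * \big[Num.max/0]_(1 <= l < N.+1)
                \big[Num.max/0]_(1 <= m < M.+1) (nrm (W l m))^-1,
        lp_norm nrm p (fun k => iter n (T 1%N) z k - x 1%N k) <=
          C * maxover N M n f (fun l => (2 <= l)%N)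
                (fun l j => in_img_gt (f 1%N) n M j) (fun l j => ratio 1%N l j) &
        forall i, (2 <= i <= N)%N ->
          lp_norm nrm p (fun k => iter n (T i) z k - x i k) <=
            C * maxover N M n f (fun l => (l <= i.-1)%N)
                  (fun l j => in_img_le (f i) n M j)
                  (fun l j => nrm (W i (iter_inv (f i) n j) / W l (iter_inv (f l) n j)
                                   - a i (iter_inv (f i) n j) / a l (iter_inv (f l) n j)))
          + C * maxover N M n f (fun l => l != i)
                  (fun l j => in_img_gt (f i) n M j) (fun l j => ratio i l j)].

End Statement.

From HB Require Import structures.
From mathcomp Require Import all_boot all_order all_algebra.
From mathcomp Require Import all_classical all_reals all_analysis.
From mathcomp Require Import complex.
Set Implicit Arguments.
Unset Strict Implicit.
Unset Printing Implicit Defensive.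

Import Order.TTheory GRing.Theory Num.Theory.
Local Open Scope ring_scope.

(* Put z_j := a^(l)_k / W^(l)_(k,n) whenever j = f_l^n(k) with 1 <= k <= M, for the least
   such l, and z_j := 0 if there is none.  Since (T_i^n z)_m = W^(i)_(m,n) z_(f_i^n(m)), the
   m-th coordinate of T_i^n z - x_i vanishes when that least l is i itself; otherwise it is
   a^(l)_k (W^(i)_(m,n) / W^(l)_(k,n) - a^(i)_m / a^(l)_k) with l < i if m <= M, and
   a^(l)_k W^(i)_(m,n) / W^(l)_(k,n) with l <> i if m > M.  As f_i^n is injective, the
   nonzero coordinates are labelled by distinct pairs (l, k) in [N] x [M], so there are at
   most MN of them; each is bounded using |a^(l)_k| <= Gamma, and the l^p norm is at most
   the l^1 norm. *)

Section FinitelySupportedSums.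
Variable R : realType.

Lemma series_finsupp (F : nat -> R) B : (forall k, (B < k)%N -> F k = 0) ->
  \big[+%R/0]_(1 <= k <oo) F k = \sum_(1 <= k < B.+1) F k.
Proof.
move=> F0; apply: lim_near_cst; first exact: Rhausdorff.
exists B.+1 => // n /= Bn; rewrite (@big_cat_nat _ _ _ B.+1) //= [X in _ + X]big1_seq ?addr0 //.
by move=> k /andP[_]; rewrite mem_index_iota => /andP[Bk _]; apply: F0.
Qed.

Lemma sum_powR_le (p : R) (r : seq nat) (F : nat -> R) : 1 <= p ->
  uniq r -> (forall k, 0 <= F k) ->
  \sum_(k <- r) F k `^ p <= (\sum_(k <- r) F k) `^ p.
Proof.
move=> p1 ur F0; set s := \sum_(k <- r) F k.
have s0 : 0 <= s by apply: sumr_ge0.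
have powR_split x : 0 <= x -> x `^ p = x * x `^ (p - 1).
  move=> x0; rewrite -{2}(powRr1 x0) -powRD; first by rewrite addrC subrK.
  by rewrite addrC subrK gt_eqF // (lt_le_trans ltr01).
rewrite [X in _ <= X]powR_split // /s mulr_suml big_seq [X in _ <= X]big_seq.
apply: ler_sum => k kr; rewrite powR_split //; apply: ler_wpM2l => //.
apply: ge0_ler_powR; rewrite ?subr_ge0 ?nnegrE //.
by rewrite (bigD1_seq k) //= lerDl sumr_ge0.
Qed.

End FinitelySupportedSums.

Section LpNormFinSupp.
Variables (R : realType) (K : fieldType) (nrm : K -> R).
Hypothesis nrm0 : nrm 0 = 0.
Hypothesis nrm_ge0 : forall x, 0 <= nrm x.
Variables (p : R) (v : nat -> K) (B : nat).
Hypothesis v_supp : forall k, (B < k)%N -> v k = 0.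

Lemma lp_normE : p != 0 ->
  lp_norm nrm p v = (\sum_(1 <= k < B.+1) nrm (v k) `^ p) `^ p^-1.
Proof.
move=> p0; rewrite /lp_norm (@series_finsupp _ _ B) // => k /v_supp ->.
by rewrite nrm0 powR0.
Qed.

Lemma lp_norm_le_sum : 1 <= p -> lp_norm nrm p v <= \sum_(1 <= k < B.+1) nrm (v k).
Proof.
move=> p1; have p_gt0 : 0 < p by apply: lt_le_trans p1.
have s0 : 0 <= \sum_(1 <= k < B.+1) nrm (v k) by rewrite sumr_ge0.
rewrite lp_normE ?gt_eqF // -[X in _ <= X](powRr1 s0) -(mulfV (lt0r_neq0 p_gt0)) powRrM.
apply: ge0_ler_powR; rewrite ?nnegrE ?invr_ge0 ?(ltW p_gt0) ?powR_ge0 //.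
  by rewrite sumr_ge0 // => *; rewrite powR_ge0.
by apply: sum_powR_le; rewrite ?iota_uniq.
Qed.

Lemma nrm_le_lp_norm k : 0 < p -> (0 < k)%N -> nrm (v k) <= lp_norm nrm p v.
Proof.
move=> p0 k0; have [kB|Bk] := leqP k B; last by rewrite v_supp // nrm0 powR_ge0.
rewrite lp_normE ?gt_eqF // -{1}(powRr1 (nrm_ge0 (v k))) -(mulfV (lt0r_neq0 p0)) powRrM.
apply: ge0_ler_powR; rewrite ?nnegrE ?invr_ge0 ?(ltW p0) ?powR_ge0 //.
  by rewrite sumr_ge0 // => *; rewrite powR_ge0.
rewrite (bigD1_seq k) ?iota_uniq ?mem_index_iota ?k0 //= lerDl.
by rewrite sumr_ge0 // => *; rewrite powR_ge0.
Qed.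

End LpNormFinSupp.

Lemma sum_eqn_map_le1 (g : nat -> nat) c (s : seq nat) :
  uniq (map g s) -> (\sum_(m <- s) (c == g m) <= 1)%N.
Proof.
elim: s => [|x s IH]; first by rewrite big_nil.
rewrite /= big_cons => /andP[gx_s us]; case: eqP => [->|_]; last by rewrite IH.
rewrite big1_seq // => y /andP[_ ys]; case: eqP => // gxy.
by move: gx_s; rewrite gxy map_f.
Qed.

Lemma sum_labelled_le (R : numDomainType) (F : nat -> R) (g : nat -> nat)
    (h : nat -> nat -> nat) N M B (b : R) :
  0 <= b -> {in [pred m | (0 < m)%N] &, injective g} ->
  (forall m, (1 <= m <= B)%N -> F m = 0 \/
     F m <= b /\ exists l k, [/\ (1 <= l <= N)%N, (1 <= k <= M)%N & h l k = g m]) ->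
  \sum_(1 <= m < B.+1) F m <= M%:R * N%:R * b.
Proof.
move=> b0 g_inj F_le; rewrite -natrM mulrC mulnC.
pose c m := (\sum_(1 <= l < N.+1) \sum_(1 <= k < M.+1) (h l k == g m))%N.
apply: (@le_trans _ _ (\sum_(1 <= m < B.+1) b * (c m)%:R)).
  rewrite big_seq [X in _ <= X]big_seq; apply: ler_sum => m.
  rewrite mem_index_iota ltnS => mB.
  have [->|[Fb [l [k [/andP[l1 lN] /andP[k1 kM] hg]]]]] := F_le m mB.
    by rewrite mulr_ge0.
  apply: (le_trans Fb); rewrite -[leLHS]mulr1 ler_wpM2l // ler1n.
  rewrite /c (bigD1_seq l) ?mem_index_iota ?l1 ?ltnS ?iota_uniq //=.
  by rewrite (bigD1_seq k) ?mem_index_iota ?k1 ?ltnS ?iota_uniq //= hg eqxx.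
rewrite -mulr_sumr -natr_sum ler_wpM2l // ler_nat /c exchange_big /=.
under eq_bigr => l _ do rewrite exchange_big /=.
apply: (@leq_trans (\sum_(1 <= l < N.+1) \sum_(1 <= k < M.+1) 1)%N).
  apply: leq_sum => l _; apply: leq_sum => k _; apply: sum_eqn_map_le1.
  rewrite map_inj_in_uniq ?iota_uniq // => m m'.
  by rewrite !mem_index_iota => /andP[m0 _] /andP[m0' _]; apply: g_inj.
by rewrite !sum_nat_const_nat !subSS !subn0 muln1.
Qed.

Definition shift_map (f : nat -> nat) : Prop :=
  (forall m, (0 < m)%N -> (f m < f m.+1)%N) /\ (1 < f 1)%N.

Section ShiftMap.
Variable f : nat -> nat.
Hypothesis fP : shift_map f.

Lemma ltn_shift_map m : (0 < m)%N -> (m < f m)%N.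
Proof.
case: fP => f_incr f1; elim: m => // -[_ _ //|m] IH _.
exact: leq_ltn_trans (IH _) (f_incr _ _).
Qed.

Lemma shift_map_mono m m' : (0 < m)%N -> (m < m')%N -> (f m < f m')%N.
Proof.
case: fP => f_incr _ m0; elim: m' => // m' IH; rewrite ltnS leq_eqVlt.
case/predU1P => [<-|mm']; first exact: f_incr.
by apply: ltn_trans (IH mm') (f_incr _ _); apply: leq_ltn_trans mm'.
Qed.

Lemma leq_iter n m : (0 < m)%N -> (m <= iter n f m)%N.
Proof.
move=> m0; elim: n => //= k IH.
exact: leq_trans IH (ltnW (ltn_shift_map (leq_trans m0 IH))).
Qed.

Lemma iter_gt0 n m : (0 < m)%N -> (0 < iter n f m)%N.
Proof. by move=> m0; apply: leq_trans m0 (leq_iter n m0). Qed.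

Lemma iter_inj n : {in [pred m | (0 < m)%N] &, injective (iter n f)}.
Proof.
have mono m m' : (0 < m)%N -> (m < m')%N -> (iter n f m < iter n f m')%N.
  move=> m0 mm'; elim: n => //= k IH.
  exact: shift_map_mono (iter_gt0 k m0) IH.
move=> m m' m0 m0' E; case: (ltngtP m m') => // mm'.
  by have := mono _ _ m0 mm'; rewrite E ltnn.
by have := mono _ _ m0' mm'; rewrite E ltnn.
Qed.

Lemma iter_invK n m : (0 < m)%N -> iter_inv f n (iter n f m) = m.
Proof. by move=> m0; apply: xget_unique => // k [k0 /iter_inj]; apply. Qed.

Lemma in_iter_range_iter n m : (0 < m)%N -> in_iter_range f n (iter n f m).
Proof. by move=> m0; apply/asboolP; exists m. Qed.

Lemma in_img_leE n M m : (0 < m)%N -> in_img_le f n M (iter n f m) = (m <= M)%N.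
Proof. by move=> m0; rewrite /in_img_le iter_invK // in_iter_range_iter. Qed.

Lemma in_img_gtE n M m : (0 < m)%N -> in_img_gt f n M (iter n f m) = (M < m)%N.
Proof. by move=> m0; rewrite /in_img_gt iter_invK // in_iter_range_iter. Qed.

Lemma in_img_leP n M j : in_img_le f n M j ->
  exists2 k, (1 <= k <= M)%N & iter n f k = j.
Proof. by case/andP=> /asboolP[k [k0 <-]]; rewrite iter_invK // => kM; exists k; rewrite ?k0. Qed.

End ShiftMap.

Section PseudoShiftPowers.
Variables (K : fieldType) (f : nat -> nat) (w : nat -> K).
Hypothesis fP : shift_map f.

Lemma iter_pshift k z m : (0 < m)%N ->
  iter k (pshift f w) z m = Wprod f w m k * z (iter k f m).
Proof.
elim: k m => [|k IH] m m0; first by rewrite /Wprod big_geq // mul1r.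
rewrite iterS {1}/pshift (negbTE (lt0n_neq0 m0)) IH; last exact: (iter_gt0 fP 1 m0).
rewrite /Wprod (@big_nat_recl _ _ _ k.+1) // !iterSr mulrA.
by congr (_ * _ * _); apply: eq_bigr => i _; rewrite iterSr.
Qed.

Lemma Wprod_neq0 k m : (forall m, (0 < m)%N -> w (f m) != 0) -> (0 < m)%N ->
  Wprod f w m k != 0.
Proof.
move=> w0 m0; rewrite prodf_seq_neq0; apply/allP => -[|nu]; first by rewrite mem_index_iota.
by rewrite /= w0 // iter_gt0.
Qed.

End PseudoShiftPowers.

Section MaxOver.
Variables (R : realType) (N M : nat).

Lemma le_bigmax_nat2 (P : pred nat) (Q : nat -> pred nat) (F : nat -> nat -> R) l k :
  (1 <= l <= N)%N -> P l -> (1 <= k <= M)%N -> Q l k ->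
  F l k <= \big[Num.max/0]_(1 <= l < N.+1 | P l) \big[Num.max/0]_(1 <= k < M.+1 | Q l k) F l k.
Proof.
move=> lN Pl kM Qlk; apply: bigmax_sup_seq Pl _; first by rewrite mem_index_iota ltnS.
by apply: le_bigmax_seq Qlk; rewrite mem_index_iota ltnS.
Qed.

Variables (n : nat) (f : nat -> nat -> nat).
Implicit Types (lcond : pred nat) (jcond : nat -> nat -> bool) (F : nat -> nat -> R).

Lemma maxover_ge0 lcond jcond F : 0 <= maxover N M n f lcond jcond F.
Proof. exact: bigmax_ge_id. Qed.

Lemma le_maxover lcond jcond F l k :
  (1 <= l <= N)%N -> lcond l -> (1 <= k <= M)%N -> jcond l (iter n (f l) k) ->
  F l (iter n (f l) k) <= maxover N M n f lcond jcond F.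
Proof. exact: (le_bigmax_nat2 (Q := fun l k => jcond l (iter n (f l) k))). Qed.

Lemma eq_maxover_lcond lcond lcond' jcond F :
  (forall l, (1 <= l <= N)%N -> lcond l = lcond' l) ->
  maxover N M n f lcond jcond F = maxover N M n f lcond' jcond F.
Proof.
move=> eq_lc; rewrite /maxover big_nat_cond [RHS]big_nat_cond.
by apply: eq_bigl => l; rewrite ltnS; case: (boolP (1 <= l <= N)%N) => // /eq_lc ->.
Qed.

Lemma maxover_eq0 lcond jcond F : (forall l, (1 <= l <= N)%N -> ~~ lcond l) ->
  maxover N M n f lcond jcond F = 0.
Proof.
move=> lc0; rewrite (eq_maxover_lcond (lcond' := xpred0)) /maxover ?big_pred0 //.
by move=> l /lc0 /negbTE.
Qed.

End MaxOver.

Section Construction.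
Variables (R : realType) (K : fieldType) (nrm : K -> R).
Hypothesis nrm0 : nrm 0 = 0.
Hypothesis nrm_ge0 : forall x, 0 <= nrm x.
Hypothesis nrmM : forall x y, nrm (x * y) = nrm x * nrm y.
Hypothesis nrmV : forall x, nrm x^-1 = (nrm x)^-1.

Variables (p : R) (N : nat) (f : nat -> nat -> nat) (w : nat -> nat -> K)
  (n M : nat) (a : nat -> nat -> K).
Hypothesis p_ge1 : 1 <= p.
Hypothesis fw_shift : forall i, (1 <= i <= N)%N -> pseudo_shift_data nrm (f i) (w i).
Hypothesis a_neq0 : forall i m, (1 <= i <= N)%N -> (1 <= m <= M)%N -> a i m != 0.

Local Notation W i m := (Wprod (f i) (w i) m n).
Local Notation x i := (finvec M (a i)).
Local Notation Gamma := (\big[Num.max/0]_(1 <= i < N.+1) lp_norm nrm p (x i)).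

Lemma shift_map_f i : (1 <= i <= N)%N -> shift_map (f i).
Proof. by case/fw_shift. Qed.

Lemma W_neq0 i m : (1 <= i <= N)%N -> (0 < m)%N -> W i m != 0.
Proof.
move=> iN m0; case: (fw_shift iN) => _ _ _ w0.
exact: (Wprod_neq0 (shift_map_f iN) n w0 m0).
Qed.

Lemma nrm_a_le_Gamma i k : (1 <= i <= N)%N -> (1 <= k <= M)%N -> nrm (a i k) <= Gamma.
Proof.
move=> iN /andP[k1 kM].
have x_supp j : (M < j)%N -> x i j = 0 by rewrite /finvec ltnNge => /negbTE ->; rewrite andbF.
have -> : a i k = x i k by rewrite /finvec k1 kM.
apply: le_trans (nrm_le_lp_norm nrm0 nrm_ge0 x_supp (lt_le_trans ltr01 p_ge1) k1) _.
by apply: (le_bigmax_seq _ i xpredT); rewrite ?mem_index_iota ?ltnS.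
Qed.

Definition covers j l := in_img_le (f l) n M j.
Definition covered j := has (covers j) (iota 1 N).
Definition first_cover j := (find (covers j) (iota 1 N)).+1.

Definition z j : K :=
  if covered j then
    let l := first_cover j in let k := iter_inv (f l) n j in a l k / W l k
  else 0.

Lemma first_cover_spec j :
  covered j -> (1 <= first_cover j <= N)%N && covers j (first_cover j).
Proof.
move=> cj; have := cj; rewrite /covered has_find size_iota => ltN.
by have := nth_find 0%N cj; rewrite nth_iota // add1n => ->; rewrite /first_cover ltnS ltN.
Qed.

Lemma first_cover_min j l : (1 <= l <= N)%N -> covers j l -> (first_cover j <= l)%N.
Proof.
case: l => // l /= lN cl; rewrite /first_cover ltnS leqNgt; apply/negP => lt_find.
by have := before_find 0%N lt_find; rewrite nth_iota ?add1n ?cl.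
Qed.

Lemma covered_intro j l : (1 <= l <= N)%N -> covers j l -> covered j.
Proof. by move=> /andP[l1 lN] cl; apply/hasP; exists l; rewrite // mem_iota l1 add1n ltnS. Qed.

Lemma z_cover j : covered j -> exists k,
  [/\ (1 <= k <= M)%N, iter n (f (first_cover j)) k = j &
      z j = a (first_cover j) k / W (first_cover j) k].
Proof.
move=> cj; have /andP[lN cl] := first_cover_spec cj; set l := first_cover j in lN cl *.
have [k kM kj] := in_img_leP (shift_map_f lN) cl.
exists k; split=> //; case/andP: kM => k0 _.
by rewrite /z cj -/l -kj (iter_invK (shift_map_f lN)).
Qed.

Definition z_bound := (\max_(1 <= l < N.+1) \max_(1 <= k < M.+1) iter n (f l) k)%N.

Lemma z_supp j : (z_bound < j)%N -> z j = 0.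
Proof.
move=> bj; case cj: (covered j); last by rewrite /z cj.
have /andP[/andP[l1 lN] _] := first_cover_spec cj.
have [k [/andP[k0 kM] kj _]] := z_cover cj.
suff : (j <= z_bound)%N by rewrite leqNgt bj.
rewrite -kj; apply: (bigmaxn_sup_seq (first_cover j)); rewrite ?mem_index_iota ?l1 ?ltnS //.
by apply: (leq_bigmax_seq k); rewrite ?mem_index_iota ?k0 ?ltnS.
Qed.

Lemma z_in_span : in_span z.
Proof.
split; last by exists z_bound; apply: z_supp.
case c0: (covered 0); last by rewrite /z c0.
have /andP[lN _] := first_cover_spec c0.
have [k [/andP[k0 _] k_to_0 _]] := z_cover c0.
by move: (iter_gt0 (shift_map_f lN) n k0); rewrite k_to_0.
Qed.

Local Notation residual i :=
  (fun k => iter n (pshift (f i) (w i)) z k - x i k).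
Local Notation mismatch i :=
  (maxover N M n f (fun l => (l <= i.-1)%N) (fun l j => in_img_le (f i) n M j)
     (fun l j => nrm (W i (iter_inv (f i) n j) / W l (iter_inv (f l) n j)
                      - a i (iter_inv (f i) n j) / a l (iter_inv (f l) n j)))).
Local Notation overlap i :=
  (maxover N M n f (fun l => l != i) (fun l j => in_img_gt (f i) n M j)
     (fun l j => nrm (W i (iter_inv (f i) n j) / W l (iter_inv (f l) n j)))).

Lemma Gamma_ge0 : 0 <= Gamma.
Proof. exact: bigmax_ge_id. Qed.

Lemma z_norm_le : lp_norm nrm p z <= M%:R * N%:R * Gamma *
  \big[Num.max/0]_(1 <= l < N.+1) \big[Num.max/0]_(1 <= m < M.+1) (nrm (W l m))^-1.
Proof.
set maxW := \big[Num.max/0]_(1 <= l < N.+1) _.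
apply: le_trans (lp_norm_le_sum nrm0 nrm_ge0 z_supp p_ge1) _; rewrite -mulrA.
apply: (sum_labelled_le (g := id) (h := fun l k => iter n (f l) k)) => //.
  by rewrite mulr_ge0 ?Gamma_ge0 ?bigmax_ge_id.
move=> j _; case cj: (covered j); last by left; rewrite /z cj.
right; have /andP[/andP[l1 lN] _] := first_cover_spec cj.
have [k [/andP[k0 kM] kj ->]] := z_cover cj.
split; last by exists (first_cover j), k; rewrite l1 lN k0 kM.
rewrite nrmM nrmV ler_pM ?invr_ge0 ?nrm_a_le_Gamma ?l1 ?k0 //.
by apply: (le_bigmax_nat2 (P := xpredT) (Q := fun _ _ => true)); rewrite ?l1 ?k0.
Qed.

Lemma le_mismatch i l m k : (1 <= i <= N)%N -> (1 <= l < i)%N -> (1 <= m <= M)%N ->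
  (1 <= k <= M)%N -> iter n (f l) k = iter n (f i) m ->
  nrm (W i m / W l k - a i m / a l k) <= mismatch i.
Proof.
move=> /andP[i1 iN] /andP[l0 li] /andP[m0 mM] /andP[k0 kM] kj.
have lN : (1 <= l <= N)%N by rewrite l0 (leq_trans (ltnW li) iN).
have fi : shift_map (f i) by apply: shift_map_f; rewrite i1.
have fl := shift_map_f lN.
apply: le_trans (le_maxover (k := k) _ lN _ _ _).
- by rewrite /= (iter_invK fl) // kj (iter_invK fi).
- by rewrite -ltnS prednK.
- by rewrite k0.
- by rewrite /= kj (in_img_leE fi).
Qed.

Lemma le_overlap i l m k : (1 <= i <= N)%N -> (1 <= l <= N)%N -> l != i ->
  (1 <= k <= M)%N -> (M < m)%N -> iter n (f l) k = iter n (f i) m ->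
  nrm (W i m / W l k) <= overlap i.
Proof.
move=> iN lN li /andP[k0 kM] Mm kj; have m0 : (0 < m)%N by apply: leq_ltn_trans Mm.
have fi := shift_map_f iN; have fl := shift_map_f lN.
apply: le_trans (le_maxover (k := k) _ lN li _ _).
- by rewrite /= (iter_invK fl) // kj (iter_invK fi).
- by rewrite k0.
- by rewrite /= kj (in_img_gtE fi).
Qed.

Lemma residual_coord i m : (1 <= i <= N)%N -> (0 < m)%N ->
  residual i m = W i m * z (iter n (f i) m) - x i m.
Proof. by move=> iN m0; rewrite /= (iter_pshift (w i) (shift_map_f iN)). Qed.

Lemma residual_supp i : (1 <= i <= N)%N ->
  forall k, (z_bound + M < k)%N -> residual i k = 0.
Proof.
move=> iN k bk; have k0 : (0 < k)%N by apply: leq_ltn_trans bk.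
rewrite residual_coord // z_supp; last first.
  exact: leq_trans (leq_ltn_trans (leq_addr _ _) bk) (leq_iter (shift_map_f iN) n k0).
by rewrite /finvec (leqNgt k M) (leq_ltn_trans (leq_addl _ _) bk) andbF mulr0 subr0.
Qed.

Lemma residual_coord_le i m : (1 <= i <= N)%N -> (1 <= m <= M)%N ->
  nrm (residual i m) <= Gamma * mismatch i.
Proof.
move=> iN /andP[m0 mM]; have fi := shift_map_f iN; set j := iter n (f i) m.
have cij : covers j i by rewrite /covers (in_img_leE fi).
have cj := covered_intro iN cij; have li := first_cover_min iN cij.
have /andP[/andP[l0 _] _] := first_cover_spec cj.
rewrite residual_coord // -/j.
have -> : x i m = a i m by rewrite /finvec m0 mM.
have [k [kM kj ->]] := z_cover cj; set l := first_cover j in li l0 kM kj *.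
move: li; rewrite leq_eqVlt => /predU1P[l_eq_i | l_lt_i].
  have k0 : (0 < k)%N by case/andP: kM.
  have km : k = m by apply: (iter_inj (n := n) fi k0 m0); rewrite l_eq_i in kj.
  rewrite l_eq_i km mulrC divfK ?W_neq0 // subrr nrm0.
  by rewrite mulr_ge0 ?Gamma_ge0 ?maxover_ge0.
have lN : (1 <= l <= N)%N by rewrite l0 (leq_trans (ltnW l_lt_i)); case/andP: iN.
have ak0 : a l k != 0 by apply: a_neq0.
have -> : W i m * (a l k / W l k) - a i m = a l k * (W i m / W l k - a i m / a l k).
  by rewrite mulrBr mulrCA; congr (_ - _); rewrite mulrCA divff ?mulr1.
rewrite nrmM ler_pM ?nrm_a_le_Gamma //.
by apply: (le_mismatch iN _ _ kM kj); rewrite ?l0 ?l_lt_i ?m0.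
Qed.

Lemma residual_coord_gt i m : (1 <= i <= N)%N -> (M < m)%N -> covered (iter n (f i) m) ->
  nrm (residual i m) <= Gamma * overlap i.
Proof.
move=> iN Mm cj; have fi := shift_map_f iN; have m0 : (0 < m)%N by apply: leq_ltn_trans Mm.
have /andP[lN _] := first_cover_spec cj.
rewrite residual_coord //.
have -> : x i m = 0 by rewrite /finvec (leqNgt m M) Mm andbF.
have [k [kM kj ->]] := z_cover cj; set l := first_cover _ in lN kj *.
have li : l != i.
  apply/eqP => l_eq_i; case/andP: kM => k0 kM; rewrite l_eq_i in kj.
  by move: Mm; rewrite -(iter_inj fi k0 m0 kj) ltnNge kM.
rewrite subr0 mulrCA nrmM ler_pM ?nrm_a_le_Gamma //.
exact: le_overlap.
Qed.

Lemma residual_norm_le i : (1 <= i <= N)%N ->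
  lp_norm nrm p (residual i) <=
    M%:R * N%:R * Gamma * mismatch i + M%:R * N%:R * Gamma * overlap i.
Proof.
move=> iN; have fi := shift_map_f iN.
apply: le_trans (lp_norm_le_sum nrm0 nrm_ge0 (residual_supp iN) p_ge1) _.
rewrite -mulrDr -mulrA.
apply: (sum_labelled_le (g := iter n (f i)) (h := fun l k => iter n (f l) k)).
- by rewrite mulr_ge0 ?Gamma_ge0 ?addr_ge0 ?maxover_ge0.
- exact: iter_inj.
move=> m /andP[m0 _]; case: (leqP m M) => [mM | Mm].
  right; split; last by exists i, m; rewrite iN m0 mM.
  apply: le_trans (residual_coord_le iN _) _; first by rewrite m0.
  by rewrite ler_wpM2l ?Gamma_ge0 // lerDl maxover_ge0.
case cj: (covered (iter n (f i) m)); last first.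
  by left; rewrite residual_coord // /z cj /finvec (leqNgt m M) Mm andbF mulr0 subr0.
right; split.
  apply: le_trans (residual_coord_gt iN Mm cj) _.
  by rewrite ler_wpM2l ?Gamma_ge0 // lerDr maxover_ge0.
have /andP[lN _] := first_cover_spec cj; have [k [kM kj _]] := z_cover cj.
by exists (first_cover (iter n (f i) m)), k; rewrite lN kM.
Qed.

End Construction.

Lemma lemma2p5_prop_abs (R : realType) (K : fieldType) (nrm : K -> R) :
  nrm 0 = 0 -> (forall x, 0 <= nrm x) -> (forall x y, nrm (x * y) = nrm x * nrm y) ->
  (forall x, nrm x^-1 = (nrm x)^-1) -> lemma2p5_prop nrm.
Proof.
move=> nrm0 nrm_ge0 nrmM nrmV p N f w n M a p_ge1 N2 _ _ fw_shift a_neq0; cbv zeta.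
have residual_le := residual_norm_le nrm0 nrm_ge0 nrmM n p_ge1 fw_shift a_neq0.
exists (z N f w n M a); split.
- exact: (z_in_span n M a fw_shift).
- exact: (z_norm_le nrm0 nrm_ge0 nrmM nrmV n M a p_ge1 fw_shift).
- have := residual_le 1%N (ltnW N2); rewrite maxover_eq0 ?mulr0 ?add0r; last by case.
  by rewrite (@eq_maxover_lcond _ _ _ _ _ _ (fun l => 2 <= l)%N) // => -[|[]].
- by move=> i /andP[i2 iN]; apply: residual_le; rewrite (ltnW i2).
Qed.

Theorem lemma2p5 (R : realType) :
  lemma2p5_prop (fun x : R => `|x|) /\ lemma2p5_prop (@Normc.normc R).
Proof.
split; apply: lemma2p5_prop_abs.
- exact: normr0.
- exact: normr_ge0.
- exact: normrM.
- exact: normfV.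
- exact: Normc.normc0.
- by case=> x y; rewrite /Normc.normc sqrtr_ge0.
- exact: Normc.normcM.
- exact: Normc.normcV.
Qed.
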